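(* Define $\tau:\mathbb N\to\mathbb N$ by $$\tau(n)=\begin{cases}\lfloor\varphi n+1\rfloor, & n\in R_{2,0},\\ \lfloor\varphi n-1\rfloor, & n\in R_{1,0},\\ \lfloor(\varphi-1) n+1\rfloor, & n\in R_{1,1}.\end{cases}$$ Then $\tau$ is an $R_{i,j}$-permutation of $\mathbb N$ (first values $1,2,5,3,7,4,10,13,6,15,\dots$), and its inverse is the $R_{i,j}$-permutation $$\tau^{-1}(n)=\begin{cases}\lfloor\varphi n\rfloor, & n\in R_{2,0}\cup R_{1,1},\\ \lfloor(\varphi-1) n+1\rfloor, & n\in R_{2,1},\\ \lfloor(\varphi-1) n\rfloor, & n\in R_{3,0}.\end{cases}$$
   Context: $\mathbb N=\{1,2,\dots\}$, $\varphi=\frac{1+\sqrt5}{2}$, $F$ the Fibonacci numbers ($F(0)=0,F(1)=F(2)=1$). For $i\in\mathbb Z^{\ge0},j\in\mathbb Z$, $R_{i,j}$ is the range of $n\mapsto F(i+1)\lfloor n\varphi\rfloor+F(i)n-j$, $n\in\mathbb N$. An $R_{i,j}$-permutation is a permutation $\pi$ of $\mathbb N$ defined piecewise on a finite partition of $\mathbb N$ into sets $R_{i,j}$, with $\pi(n)=\lfloor(a\varphi+b)n+c\rfloor$ on each piece for integers $a,b,c$ depending on the piece. *)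

From Stdlib Require Import Reals ZArith List ClassicalEpsilon.
Open Scope R_scope.

Fixpoint fib (n : nat) : Z :=
  match n with
  | O => 0%Z
  | S O => 1%Z
  | S ((S m) as p) => (fib p + fib m)%Z
  end.

Definition phi : R := (1 + sqrt 5) / 2.

Definition flr (x : R) : Z := Int_part x.

(* N = {1,2,...} is represented by the integers n with 1 <= n. *)
Definition Rset (i : nat) (j : Z) (m : Z) : Prop :=
  exists n : Z, (1 <= n)%Z /\
    m = (fib (S i) * flr (IZR n * phi) + fib i * n - j)%Z.

Definition RpartN (l : list (nat * Z)) : Prop :=
  (forall p, In p l -> forall m, Rset (fst p) (snd p) m -> (1 <= m)%Z) /\
  (forall m, (1 <= m)%Z -> exists p, In p l /\ Rset (fst p) (snd p) m) /\
  (forall k1 k2 m, (k1 < length l)%nat -> (k2 < length l)%nat -> k1 <> k2 ->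
     Rset (fst (nth k1 l (O, 0%Z))) (snd (nth k1 l (O, 0%Z))) m ->
     Rset (fst (nth k2 l (O, 0%Z))) (snd (nth k2 l (O, 0%Z))) m -> False).

(* a piece: ((i, j), (a, b, c)) meaning pi(n) = floor((a phi + b) n + c) on R_{i,j} *)
Definition piece := ((nat * Z) * (Z * Z * Z))%type.

Definition piece_fun (abc : Z * Z * Z) (n : Z) : Z :=
  let '(a, b, c) := abc in
  flr ((IZR a * phi + IZR b) * IZR n + IZR c).

Definition perm_of_N (pi : Z -> Z) : Prop :=
  (forall n, (1 <= n)%Z -> (1 <= pi n)%Z) /\
  (forall n1 n2, (1 <= n1)%Z -> (1 <= n2)%Z -> pi n1 = pi n2 -> n1 = n2) /\
  (forall m, (1 <= m)%Z -> exists n, (1 <= n)%Z /\ pi n = m).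

Definition is_Rperm (pi : Z -> Z) : Prop :=
  perm_of_N pi /\
  exists ps : list piece,
    RpartN (map fst ps) /\
    (forall p, In p ps -> forall n, Rset (fst (fst p)) (snd (fst p)) n ->
        pi n = piece_fun (snd p) n).

Definition pif {A : Type} (P : Prop) (x y : A) : A :=
  if excluded_middle_informative P then x else y.

(* tau as defined piecewise in the paper (value 0 outside the three sets,
   irrelevant since they partition N) *)
Definition tau (n : Z) : Z :=
  pif (Rset 2 0 n) (flr (phi * IZR n + 1))
  (pif (Rset 1 0 n) (flr (phi * IZR n - 1))
  (pif (Rset 1 1 n) (flr ((phi - 1) * IZR n + 1)) 0%Z)).

Definition tau_inv (n : Z) : Z :=
  pif (Rset 2 0 n \/ Rset 1 1 n) (flr (phi * IZR n))
  (pif (Rset 2 1 n) (flr ((phi - 1) * IZR n + 1))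
  (pif (Rset 3 0 n) (flr ((phi - 1) * IZR n)) 0%Z)).

(* With lw n = floor(n phi) and uw n = lw n + n = floor(n phi^2) (the lower and upper Wythoff
   sequences), Beatty's theorem says that lw(N) and uw(N) partition N.  Since lw and uw are
   injective, the images of N under lw o uw, uw, lw o lw, and likewise under lw o uw, lw o lw,
   uw o lw, uw o uw, partition N as well.  The identities lw (lw n) = lw n + n - 1 and
   lw (uw n) = lw n + uw n identify these images with R_{2,0}, R_{1,0}, R_{1,1} and
   R_{2,0}, R_{1,1}, R_{2,1}, R_{3,0}, and show that tau acts by
     lw (uw k) |-> uw (uw k),   uw k |-> uw (lw k),   lw (lw k) |-> lw k,
   each of which tau_inv undoes. *)

From Stdlib Require Import Reals ZArith List Lia Psatz ClassicalEpsilon.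
Open Scope R_scope.

Lemma flr_spec x : IZR (flr x) <= x < IZR (flr x) + 1.
Proof. unfold flr; destruct (base_Int_part x); lra. Qed.

Lemma flr_unique x a : IZR a <= x < IZR a + 1 -> flr x = a.
Proof.
  intros [Hlo Hhi]. destruct (flr_spec x) as [Hlo' Hhi'].
  assert (a < flr x + 1)%Z by (apply lt_IZR; rewrite plus_IZR; lra).
  assert (flr x < a + 1)%Z by (apply lt_IZR; rewrite plus_IZR; lra).
  lia.
Qed.

Lemma flr_add_IZR x c : flr (x + IZR c) = (flr x + c)%Z.
Proof. destruct (flr_spec x). apply flr_unique; rewrite plus_IZR; lra. Qed.

Lemma phi_sq : phi * phi = phi + 1.
Proof. unfold phi. pose proof (sqrt_sqrt 5). nra. Qed.

Lemma phi_bounds : 1.618 < phi < 1.6185.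
Proof. unfold phi. pose proof (sqrt_sqrt 5). pose proof (sqrt_pos 5). split; nra. Qed.

(* Descent: 5 divides p, and then (q, p / 5) is a solution with |p / 5| < |q|. *)
Lemma sq_ne_five_sq p q : q <> 0%Z -> (p * p <> 5 * (q * q))%Z.
Proof.
  remember (Z.abs_nat q) as N eqn:HN. revert p q HN.
  induction N as [N IH] using lt_wf_ind. intros p q HN Hq E.
  pose proof (Z.div_mod p 5 ltac:(lia)) as Hp.
  pose proof (Z.mod_pos_bound p 5 ltac:(lia)) as Hr.
  set (t := (p / 5)%Z) in *. set (r := (p mod 5)%Z) in *.
  assert (Hr2 : (r * r = 5 * (q * q - 5 * t * t - 2 * t * r))%Z) by (rewrite Hp in E; lia).
  assert (r = 0%Z) as Hr0.
  { assert (r = 0 \/ r = 1 \/ r = 2 \/ r = 3 \/ r = 4)%Z as [|[|[|[|]]]] by lia;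
      subst r; lia. }
  rewrite Hr0 in Hp.
  assert (Et : (q * q = 5 * (t * t))%Z) by (rewrite Hp in E; lia).
  assert (Ht : t <> 0%Z) by (intros ->; nia).
  apply (IH (Z.abs_nat t)) with (p := q) (q := t); [|reflexivity|exact Ht|exact Et].
  subst N. nia.
Qed.

Lemma phi_irrational n a : n <> 0%Z -> IZR n * phi <> IZR a.
Proof.
  intros Hn E. apply (sq_ne_five_sq (2 * a - n) n Hn). apply eq_IZR.
  assert (Hs : IZR n * sqrt 5 = IZR (2 * a - n))
    by (unfold phi in E; rewrite minus_IZR, mult_IZR; lra).
  rewrite !mult_IZR, <- Hs.
  transitivity (IZR n * IZR n * (sqrt 5 * sqrt 5)); [ring|].
  rewrite sqrt_sqrt by lra. ring.
Qed.

Definition in_N (k : Z) : Prop := (1 <= k)%Z.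
Definition img (f : Z -> Z) (P : Z -> Prop) (m : Z) : Prop := exists k, P k /\ m = f k.
Definition subset_N (P : Z -> Prop) : Prop := forall k, P k -> in_N k.
Definition disjoint (P Q : Z -> Prop) : Prop := forall m, P m -> Q m -> False.

Lemma disjoint_sym P Q : disjoint P Q -> disjoint Q P.
Proof. intros H m HQ HP. exact (H m HP HQ). Qed.

Lemma disjoint_ext {P P' Q Q'} :
  (forall m, P m <-> P' m) -> (forall m, Q m <-> Q' m) -> disjoint P' Q' -> disjoint P Q.
Proof. intros HP HQ H m Pm Qm. apply (H m); [apply HP | apply HQ]; assumption. Qed.

Lemma img_intro f P k : P k -> img f P (f k).
Proof. intros Hk. exists k. split; [exact Hk | reflexivity]. Qed.

Lemma img_comp f g P m : img (fun k => f (g k)) P m <-> img f (img g P) m.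
Proof.
  split.
  - intros [k [Hk ->]]. apply img_intro, img_intro, Hk.
  - intros [? [[k [Hk ->]] ->]]. apply (img_intro (fun k => f (g k))), Hk.
Qed.

Lemma img_split f P Q R :
  (forall k, P k -> Q k \/ R k) -> forall m, img f P m -> img f Q m \/ img f R m.
Proof.
  intros HPQR m [k [Hk ->]].
  destruct (HPQR k Hk); [left | right]; apply img_intro; assumption.
Qed.

Lemma img_disjoint f P Q :
  (forall x y, f x = f y -> x = y) -> disjoint P Q -> disjoint (img f P) (img f Q).
Proof.
  intros Hf HPQ m [k [Hk ->]] [j [Hj E]]. apply Hf in E. subst j. exact (HPQ k Hk Hj).
Qed.

Lemma subset_N_in_N : subset_N in_N.
Proof. intros k Hk. exact Hk. Qed.

Lemma subset_N_img f P :
  (forall k, in_N k -> in_N (f k)) -> subset_N P -> subset_N (img f P).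
Proof. intros Hf HP m [k [Hk ->]]. apply Hf, HP, Hk. Qed.

Lemma ForallOrdPairs_nth {A} (R : A -> A -> Prop) (d : A) l :
  (forall x y, R x y -> R y x) -> ForallOrdPairs R l ->
  forall k1 k2, (k1 < length l)%nat -> (k2 < length l)%nat -> k1 <> k2 ->
  R (nth k1 l d) (nth k2 l d).
Proof.
  intros Hsym Hl. induction Hl as [|a l Ha Hl IH]; intros k1 k2 H1 H2 Hne; cbn in *; [lia|].
  rewrite Forall_forall in Ha.
  destruct k1 as [|k1], k2 as [|k2]; [lia | | |].
  - apply Ha, nth_In. lia.
  - apply Hsym, Ha, nth_In. lia.
  - apply IH; lia.
Qed.

Lemma RpartN_intro l :
  Forall (fun p => subset_N (Rset (fst p) (snd p))) l ->
  (forall m, in_N m -> Exists (fun p => Rset (fst p) (snd p) m) l) ->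
  ForallOrdPairs (fun p q => disjoint (Rset (fst p) (snd p)) (Rset (fst q) (snd q))) l ->
  RpartN l.
Proof.
  intros Hsub Hcov Hdisj. rewrite Forall_forall in Hsub. split; [|split].
  - exact Hsub.
  - intros m Hm. apply Exists_exists, Hcov, Hm.
  - intros k1 k2 m H1 H2 Hne.
    exact (ForallOrdPairs_nth _ (O, 0%Z) l (fun p q => @disjoint_sym _ _) Hdisj k1 k2 H1 H2 Hne m).
Qed.

Lemma perm_of_N_inverse f g :
  (forall n, in_N n -> in_N (f n) /\ g (f n) = n) ->
  (forall n, in_N n -> in_N (g n) /\ f (g n) = n) -> perm_of_N f.
Proof.
  intros Hf Hg. split; [|split].
  - intros n Hn. apply Hf, Hn.
  - intros n1 n2 H1 H2 E.
    rewrite <- (proj2 (Hf n1 H1)), <- (proj2 (Hf n2 H2)), E. reflexivity.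
  - intros m Hm. exists (g m). apply Hg, Hm.
Qed.

Lemma pif_true {A} (P : Prop) (x y : A) : P -> pif P x y = x.
Proof. unfold pif. destruct (excluded_middle_informative P); tauto. Qed.

Lemma pif_false {A} (P : Prop) (x y : A) : ~ P -> pif P x y = y.
Proof. unfold pif. destruct (excluded_middle_informative P); tauto. Qed.

Definition lw (n : Z) : Z := flr (IZR n * phi).
Definition uw (n : Z) : Z := (lw n + n)%Z.

Lemma lw_eq n a : IZR a <= IZR n * phi < IZR a + 1 -> lw n = a.
Proof. apply flr_unique. Qed.

Lemma lw_spec n : n <> 0%Z -> IZR (lw n) < IZR n * phi < IZR (lw n) + 1.
Proof.
  intros Hn. unfold lw. destruct (flr_spec (IZR n * phi)) as [[Hlt|Heq] Hhi]; [lra|].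
  exfalso. exact (phi_irrational n _ Hn (eq_sym Heq)).
Qed.

Lemma lw_lt k1 k2 : (k1 < k2)%Z -> (lw k1 < lw k2)%Z.
Proof.
  intros Hk. unfold lw. destruct (flr_spec (IZR k1 * phi)), (flr_spec (IZR k2 * phi)), phi_bounds.
  assert (IZR k1 + 1 <= IZR k2) by (rewrite <- plus_IZR; apply IZR_le; lia).
  apply lt_IZR. nra.
Qed.

Lemma lw_inj k1 k2 : lw k1 = lw k2 -> k1 = k2.
Proof.
  intros E. destruct (Z.lt_trichotomy k1 k2) as [H|[H|H]]; [|exact H|];
    apply lw_lt in H; lia.
Qed.

Lemma uw_inj k1 k2 : uw k1 = uw k2 -> k1 = k2.
Proof.
  unfold uw. intros E. destruct (Z.lt_trichotomy k1 k2) as [H|[H|H]]; [|exact H|];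
    pose proof (lw_lt _ _ H); lia.
Qed.

Lemma lw_ge n : (1 <= n)%Z -> (n <= lw n)%Z.
Proof.
  intros Hn. destruct (flr_spec (IZR n * phi)), phi_bounds.
  assert (1 <= IZR n) by (apply IZR_le; lia).
  assert (n < lw n + 1)%Z by (apply lt_IZR; rewrite plus_IZR; unfold lw; nra).
  lia.
Qed.

(* e = m phi - lw m lies in (0, 1) for m <> 0, so these locate lw m * phi and uw m * phi
   between consecutive integers. *)
Lemma lw_mul_phi m :
  IZR (lw m) * phi = IZR (lw m + m) - (IZR m * phi - IZR (lw m)) * (phi - 1).
Proof.
  assert (IZR m * (phi * phi) = IZR m * (phi + 1)) by (rewrite phi_sq; ring).
  rewrite plus_IZR. nra.
Qed.

Lemma uw_mul_phi m :
  IZR (uw m) * phi = IZR (2 * lw m + m) + (IZR m * phi - IZR (lw m)) * (2 - phi).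
Proof.
  unfold uw. rewrite plus_IZR. pose proof (lw_mul_phi m).
  rewrite plus_IZR, mult_IZR in *. lra.
Qed.

Lemma lw_lw m : m <> 0%Z -> lw (lw m) = (lw m + m - 1)%Z.
Proof.
  intros Hm. destruct (lw_spec m Hm), phi_bounds. apply lw_eq.
  rewrite lw_mul_phi. rewrite minus_IZR. split; nra.
Qed.

Lemma lw_uw m : lw (uw m) = (lw m + uw m)%Z.
Proof.
  pose proof (flr_spec (IZR m * phi)) as Hm. fold (lw m) in Hm. destruct phi_bounds.
  replace (lw m + uw m)%Z with (2 * lw m + m)%Z by (unfold uw; ring).
  apply lw_eq. rewrite uw_mul_phi. split; nra.
Qed.

Lemma lw_ne_uw k j : k <> 0%Z -> j <> 0%Z -> lw k <> uw j.
Proof.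
  intros Hk Hj E. destruct (lw_spec k Hk), (lw_spec j Hj), phi_bounds. unfold uw in E.
  assert (Ej : IZR (lw j) = IZR (lw k) - IZR j) by (rewrite <- minus_IZR; f_equal; lia).
  (* k = (k phi)/phi and j = (j phi^2)/phi^2 put k + j strictly between lw k and lw k + 1 *)
  assert (Hsum : IZR (k + j) = IZR (lw k) + (IZR k * phi - IZR (lw k)) * (phi - 1)
                                 + (IZR j * phi - IZR (lw j)) * (2 - phi)).
  { assert (IZR k * (phi * phi) = IZR k * (phi + 1)) by (rewrite phi_sq; ring).
    assert (IZR j * (phi * phi) = IZR j * (phi + 1)) by (rewrite phi_sq; ring).
    rewrite plus_IZR, Ej. nra. }
  assert (0 < (IZR k * phi - IZR (lw k)) * (phi - 1) < phi - 1) by (split; nra).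
  assert (0 < (IZR j * phi - IZR (lw j)) * (2 - phi) < 2 - phi) by (split; nra).
  assert (lw k < k + j)%Z by (apply lt_IZR; lra).
  assert (k + j < lw k + 1)%Z by (apply lt_IZR; rewrite (plus_IZR (lw k)); lra).
  lia.
Qed.

Lemma beatty_cover m : in_N m -> img lw in_N m \/ img uw in_N m.
Proof.
  unfold in_N. intros Hm. destruct phi_bounds. pose proof phi_sq.
  assert (Hm1 : 1 <= IZR m) by (apply IZR_le; lia).
  (* k = floor((m + 1) / phi) is the only candidate preimage under lw *)
  set (k := flr (IZR (m + 1) * (phi - 1))).
  destruct (flr_spec (IZR (m + 1) * (phi - 1))) as [Hk1 Hk2]. fold k in Hk1, Hk2.
  rewrite plus_IZR in Hk1, Hk2.
  destruct (Rlt_or_le (IZR m) (IZR k * phi)) as [Hlt|Hle].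
  - left. exists k.
    assert (Hk : (0 < k)%Z) by (apply lt_IZR; nra).
    split; [lia|]. symmetry. apply lw_eq. split; [lra|].
    assert (Hup : IZR k * phi <= IZR m + 1) by nra.
    destruct Hup as [Hup|Hup]; [exact Hup|].
    exfalso. apply (phi_irrational k (m + 1)); [lia|]. rewrite plus_IZR. exact Hup.
  - right. exists (m - k)%Z.
    assert (Hkm : (k < m)%Z).
    { apply lt_IZR. destruct (Z_le_gt_dec k 0) as [Hk0|Hk0].
      - assert (IZR k <= 0) by (apply IZR_le; lia). lra.
      - assert (1 <= IZR k) by (apply IZR_le; lia). nra. }
    split; [lia|]. unfold uw.
    replace (lw (m - k)) with k; [ring|]. symmetry. apply lw_eq. rewrite minus_IZR.
    split; nra.
Qed.

Lemma lw_in_N k : in_N k -> in_N (lw k).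
Proof. unfold in_N. intros Hk. pose proof (lw_ge k Hk). lia. Qed.

Lemma uw_in_N k : in_N k -> in_N (uw k).
Proof. unfold in_N, uw. intros Hk. pose proof (lw_ge k Hk). lia. Qed.

Local Hint Resolve lw_in_N uw_in_N subset_N_in_N subset_N_img : core.

Lemma img_lw_uw_disjoint P Q : subset_N P -> subset_N Q -> disjoint (img lw P) (img uw Q).
Proof.
  intros HP HQ m [k [Hk ->]] [j [Hj E]].
  apply (lw_ne_uw k j); [apply HP in Hk | apply HQ in Hj | exact E]; unfold in_N in *; lia.
Qed.

Lemma fib_nonneg i : (0 <= fib i)%Z.
Proof.
  enough (H : (0 <= fib i /\ 0 <= fib (S i))%Z) by apply H.
  induction i as [|i [IH1 IH2]]; [cbn; lia|].
  split; [exact IH2|]. change (fib (S (S i))) with (fib (S i) + fib i)%Z. lia.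
Qed.

Lemma Rset_subset_N i j : (j < fib (S (S i)))%Z -> subset_N (Rset i j).
Proof.
  intros Hj m [n [Hn ->]]. change (flr (IZR n * phi)) with (lw n).
  change (fib (S (S i))) with (fib (S i) + fib i)%Z in Hj.
  pose proof (lw_ge n Hn). pose proof (fib_nonneg i). pose proof (fib_nonneg (S i)).
  unfold in_N. nia.
Qed.

Lemma Rset_img i j f :
  (forall n, in_N n -> (fib (S i) * lw n + fib i * n - j)%Z = f n) ->
  forall m, Rset i j m <-> img f in_N m.
Proof.
  intros Hf m. split; intros [n [Hn ->]]; exists n; split; auto; [|symmetry]; apply Hf, Hn.
Qed.

Lemma Rset_1_0_iff m : Rset 1 0 m <-> img uw in_N m.
Proof. apply Rset_img. intros n _. unfold uw. cbn [fib]. ring. Qed.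

Lemma Rset_1_1_iff m : Rset 1 1 m <-> img lw (img lw in_N) m.
Proof.
  rewrite <- img_comp. apply Rset_img. intros n Hn. unfold in_N in Hn.
  rewrite lw_lw by lia. cbn [fib]. ring.
Qed.

Lemma Rset_2_0_iff m : Rset 2 0 m <-> img lw (img uw in_N) m.
Proof.
  rewrite <- img_comp. apply Rset_img. intros n _. rewrite lw_uw. unfold uw. cbn [fib]. ring.
Qed.

Lemma Rset_2_1_iff m : Rset 2 1 m <-> img uw (img lw in_N) m.
Proof.
  rewrite <- img_comp. apply Rset_img. intros n Hn. unfold in_N in Hn.
  unfold uw at 1. rewrite lw_lw by lia. cbn [fib]. ring.
Qed.

Lemma Rset_3_0_iff m : Rset 3 0 m <-> img uw (img uw in_N) m.
Proof.
  rewrite <- img_comp. apply Rset_img. intros n _.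
  unfold uw at 1. rewrite lw_uw. unfold uw. cbn [fib]. ring.
Qed.

Lemma disjoint_R20_R10 : disjoint (Rset 2 0) (Rset 1 0).
Proof. apply (disjoint_ext Rset_2_0_iff Rset_1_0_iff), img_lw_uw_disjoint; auto. Qed.

Lemma disjoint_R20_R11 : disjoint (Rset 2 0) (Rset 1 1).
Proof.
  apply (disjoint_ext Rset_2_0_iff Rset_1_1_iff), img_disjoint; [exact lw_inj|].
  apply disjoint_sym, img_lw_uw_disjoint; auto.
Qed.

Lemma disjoint_R10_R11 : disjoint (Rset 1 0) (Rset 1 1).
Proof.
  apply (disjoint_ext Rset_1_0_iff Rset_1_1_iff), disjoint_sym, img_lw_uw_disjoint; auto.
Qed.

Lemma disjoint_R20_R21 : disjoint (Rset 2 0) (Rset 2 1).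
Proof. apply (disjoint_ext Rset_2_0_iff Rset_2_1_iff), img_lw_uw_disjoint; auto. Qed.

Lemma disjoint_R20_R30 : disjoint (Rset 2 0) (Rset 3 0).
Proof. apply (disjoint_ext Rset_2_0_iff Rset_3_0_iff), img_lw_uw_disjoint; auto. Qed.

Lemma disjoint_R11_R21 : disjoint (Rset 1 1) (Rset 2 1).
Proof. apply (disjoint_ext Rset_1_1_iff Rset_2_1_iff), img_lw_uw_disjoint; auto. Qed.

Lemma disjoint_R11_R30 : disjoint (Rset 1 1) (Rset 3 0).
Proof. apply (disjoint_ext Rset_1_1_iff Rset_3_0_iff), img_lw_uw_disjoint; auto. Qed.

Lemma disjoint_R21_R30 : disjoint (Rset 2 1) (Rset 3 0).
Proof.
  apply (disjoint_ext Rset_2_1_iff Rset_3_0_iff), img_disjoint; [exact uw_inj|].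
  apply img_lw_uw_disjoint; auto.
Qed.

Lemma cover_tau_pieces m :
  in_N m -> img lw (img uw in_N) m \/ img uw in_N m \/ img lw (img lw in_N) m.
Proof.
  intros Hm. destruct (beatty_cover m Hm) as [H|H]; [|auto].
  destruct (img_split _ _ _ _ beatty_cover m H); auto.
Qed.

Lemma cover_tau_inv_pieces m :
  in_N m -> img lw (img uw in_N) m \/ img lw (img lw in_N) m \/
            img uw (img lw in_N) m \/ img uw (img uw in_N) m.
Proof.
  intros Hm. destruct (beatty_cover m Hm) as [H|H];
    destruct (img_split _ _ _ _ beatty_cover m H); auto.
Qed.

Lemma RpartN_tau_pieces : RpartN ((2%nat, 0%Z) :: (1%nat, 0%Z) :: (1%nat, 1%Z) :: nil).
Proof.
  apply RpartN_intro.
  - repeat constructor; apply Rset_subset_N; reflexivity.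
  - intros m Hm. rewrite !Exists_cons, Exists_nil. cbn [fst snd].
    rewrite Rset_2_0_iff, Rset_1_0_iff, Rset_1_1_iff. pose proof (cover_tau_pieces m Hm). tauto.
  - repeat constructor; cbn [fst snd].
    + exact disjoint_R20_R10.
    + exact disjoint_R20_R11.
    + exact disjoint_R10_R11.
Qed.

Lemma RpartN_tau_inv_pieces :
  RpartN ((2%nat, 0%Z) :: (1%nat, 1%Z) :: (2%nat, 1%Z) :: (3%nat, 0%Z) :: nil).
Proof.
  apply RpartN_intro.
  - repeat constructor; apply Rset_subset_N; reflexivity.
  - intros m Hm. rewrite !Exists_cons, Exists_nil. cbn [fst snd].
    rewrite Rset_2_0_iff, Rset_1_1_iff, Rset_2_1_iff, Rset_3_0_iff.
    pose proof (cover_tau_inv_pieces m Hm). tauto.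
  - repeat constructor; cbn [fst snd].
    + exact disjoint_R20_R11.
    + exact disjoint_R20_R21.
    + exact disjoint_R20_R30.
    + exact disjoint_R11_R21.
    + exact disjoint_R11_R30.
    + exact disjoint_R21_R30.
Qed.

Lemma flr_phi_affine x n b c :
  x = (phi + IZR b) * IZR n + IZR c -> flr x = (lw n + b * n + c)%Z.
Proof.
  intros ->. unfold lw. rewrite <- Z.add_assoc, <- flr_add_IZR, plus_IZR, mult_IZR.
  f_equal. ring.
Qed.

Lemma piece_fun_phi b c n : piece_fun (1%Z, b, c) n = (lw n + b * n + c)%Z.
Proof. apply flr_phi_affine. ring. Qed.

Lemma tau_on_R20 n : Rset 2 0 n -> tau n = (lw n + 1)%Z.
Proof.
  intros H. unfold tau. rewrite pif_true by exact H.
  rewrite (flr_phi_affine _ n 0 1) by ring. ring.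
Qed.

Lemma tau_on_R10 n : Rset 1 0 n -> tau n = (lw n - 1)%Z.
Proof.
  intros H. unfold tau.
  rewrite pif_false by (intros H20; exact (disjoint_R20_R10 n H20 H)).
  rewrite pif_true by exact H.
  rewrite (flr_phi_affine _ n 0 (-1)) by ring. ring.
Qed.

Lemma tau_on_R11 n : Rset 1 1 n -> tau n = (lw n - n + 1)%Z.
Proof.
  intros H. unfold tau.
  rewrite pif_false by (intros H20; exact (disjoint_R20_R11 n H20 H)).
  rewrite pif_false by (intros H10; exact (disjoint_R10_R11 n H10 H)).
  rewrite pif_true by exact H.
  rewrite (flr_phi_affine _ n (-1) 1) by ring. ring.
Qed.

Lemma tau_inv_on_R20_R11 n : Rset 2 0 n \/ Rset 1 1 n -> tau_inv n = lw n.
Proof.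
  intros H. unfold tau_inv. rewrite pif_true by exact H.
  rewrite (flr_phi_affine _ n 0 0) by ring. ring.
Qed.

Lemma tau_inv_on_R21 n : Rset 2 1 n -> tau_inv n = (lw n - n + 1)%Z.
Proof.
  intros H. unfold tau_inv.
  rewrite pif_false by
    (intros [H20|H11]; [exact (disjoint_R20_R21 n H20 H) | exact (disjoint_R11_R21 n H11 H)]).
  rewrite pif_true by exact H.
  rewrite (flr_phi_affine _ n (-1) 1) by ring. ring.
Qed.

Lemma tau_inv_on_R30 n : Rset 3 0 n -> tau_inv n = (lw n - n)%Z.
Proof.
  intros H. unfold tau_inv.
  rewrite pif_false by
    (intros [H20|H11]; [exact (disjoint_R20_R30 n H20 H) | exact (disjoint_R11_R30 n H11 H)]).
  rewrite pif_false by (intros H21; exact (disjoint_R21_R30 n H21 H)).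
  rewrite pif_true by exact H.
  rewrite (flr_phi_affine _ n (-1) 0) by ring. ring.
Qed.

Lemma tau_lw_uw k : in_N k -> tau (lw (uw k)) = uw (uw k).
Proof.
  intros Hk. rewrite tau_on_R20 by (apply Rset_2_0_iff, img_intro, img_intro, Hk).
  pose proof (uw_in_N k Hk). unfold in_N in *.
  rewrite lw_lw by lia. unfold uw at 3. lia.
Qed.

Lemma tau_uw k : in_N k -> tau (uw k) = uw (lw k).
Proof.
  intros Hk. rewrite tau_on_R10 by (apply Rset_1_0_iff, img_intro, Hk).
  unfold in_N in Hk. rewrite lw_uw. unfold uw. rewrite lw_lw by lia. lia.
Qed.

Lemma tau_lw_lw k : in_N k -> tau (lw (lw k)) = lw k.
Proof.
  intros Hk. rewrite tau_on_R11 by (apply Rset_1_1_iff, img_intro, img_intro, Hk).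
  pose proof (lw_in_N k Hk). unfold in_N in *. rewrite (lw_lw (lw k)) by lia. lia.
Qed.

Lemma tau_inv_lw k : in_N k -> tau_inv (lw k) = lw (lw k).
Proof.
  intros Hk. apply tau_inv_on_R20_R11.
  rewrite Rset_2_0_iff, Rset_1_1_iff.
  destruct (img_split _ _ _ _ beatty_cover _ (img_intro lw in_N k Hk)); auto.
Qed.

Lemma tau_inv_uw_lw k : in_N k -> tau_inv (uw (lw k)) = uw k.
Proof.
  intros Hk. rewrite tau_inv_on_R21 by (apply Rset_2_1_iff, img_intro, img_intro, Hk).
  unfold in_N in Hk. rewrite lw_uw. unfold uw. rewrite lw_lw by lia. lia.
Qed.

Lemma tau_inv_uw_uw k : in_N k -> tau_inv (uw (uw k)) = lw (uw k).
Proof.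
  intros Hk. rewrite tau_inv_on_R30 by (apply Rset_3_0_iff, img_intro, img_intro, Hk).
  rewrite lw_uw. lia.
Qed.

Lemma tau_in_N_cancel n : in_N n -> in_N (tau n) /\ tau_inv (tau n) = n.
Proof.
  intros Hn.
  destruct (cover_tau_pieces n Hn)
    as [[? [[k [Hk ->]] ->]] | [[k [Hk ->]] | [? [[k [Hk ->]] ->]]]].
  - rewrite tau_lw_uw, tau_inv_uw_uw; auto.
  - rewrite tau_uw, tau_inv_uw_lw; auto.
  - rewrite tau_lw_lw, tau_inv_lw; auto.
Qed.

Lemma tau_inv_in_N_cancel n : in_N n -> in_N (tau_inv n) /\ tau (tau_inv n) = n.
Proof.
  intros Hn. destruct (beatty_cover n Hn) as [[j [Hj ->]] | H].
  - rewrite tau_inv_lw, tau_lw_lw; auto.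
  - destruct (img_split _ _ _ _ beatty_cover n H) as [[? [[k [Hk ->]] ->]] | [? [[k [Hk ->]] ->]]].
    + rewrite tau_inv_uw_lw, tau_uw; auto.
    + rewrite tau_inv_uw_uw, tau_lw_uw; auto.
Qed.

Lemma tau_is_Rperm : is_Rperm tau.
Proof.
  split; [exact (perm_of_N_inverse _ _ tau_in_N_cancel tau_inv_in_N_cancel)|].
  exists (((2%nat, 0), (1, 0, 1)) :: ((1%nat, 0), (1, 0, -1)) :: ((1%nat, 1), (1, -1, 1)) :: nil)%Z.
  split; [exact RpartN_tau_pieces|].
  intros p Hp n. cbn in Hp.
  destruct Hp as [<-|[<-|[<-|[]]]]; cbn [fst snd]; rewrite piece_fun_phi.
  - intros H. rewrite tau_on_R20 by exact H. ring.
  - intros H. rewrite tau_on_R10 by exact H. ring.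
  - intros H. rewrite tau_on_R11 by exact H. ring.
Qed.

Lemma tau_inv_is_Rperm : is_Rperm tau_inv.
Proof.
  split; [exact (perm_of_N_inverse _ _ tau_inv_in_N_cancel tau_in_N_cancel)|].
  exists (((2%nat, 0), (1, 0, 0)) :: ((1%nat, 1), (1, 0, 0))
          :: ((2%nat, 1), (1, -1, 1)) :: ((3%nat, 0), (1, -1, 0)) :: nil)%Z.
  split; [exact RpartN_tau_inv_pieces|].
  intros p Hp n. cbn in Hp.
  destruct Hp as [<-|[<-|[<-|[<-|[]]]]]; cbn [fst snd]; rewrite piece_fun_phi.
  - intros H. rewrite tau_inv_on_R20_R11 by (left; exact H). ring.
  - intros H. rewrite tau_inv_on_R20_R11 by (right; exact H). ring.
  - intros H. rewrite tau_inv_on_R21 by exact H. ring.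
  - intros H. rewrite tau_inv_on_R30 by exact H. ring.
Qed.

Lemma lw_first_values :
  lw 1 = 1%Z /\ lw 2 = 3%Z /\ lw 3 = 4%Z /\ lw 4 = 6%Z /\ lw 5 = 8%Z /\ lw 6 = 9%Z.
Proof. pose proof phi_bounds. repeat split; apply lw_eq; lra. Qed.

Lemma tau_first_values :
  map tau (1 :: 2 :: 3 :: 4 :: 5 :: 6 :: 7 :: 8 :: 9 :: 10 :: nil)%Z
    = (1 :: 2 :: 5 :: 3 :: 7 :: 4 :: 10 :: 13 :: 6 :: 15 :: nil)%Z.
Proof.
  destruct lw_first_values as (L1 & L2 & L3 & L4 & L5 & L6).
  assert (U1 : uw 1 = 2%Z) by (unfold uw; rewrite L1; reflexivity).
  assert (U2 : uw 2 = 5%Z) by (unfold uw; rewrite L2; reflexivity).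
  assert (U3 : uw 3 = 7%Z) by (unfold uw; rewrite L3; reflexivity).
  assert (U4 : uw 4 = 10%Z) by (unfold uw; rewrite L4; reflexivity).
  assert (U5 : uw 5 = 13%Z) by (unfold uw; rewrite L5; reflexivity).
  assert (U6 : uw 6 = 15%Z) by (unfold uw; rewrite L6; reflexivity).
  (* 1, ..., 10 are lw (lw 1), uw 1, lw (uw 1), lw (lw 2), uw 2, lw (lw 3), uw 3, lw (uw 2),
     lw (lw 4), uw 4. *)
  pose proof (tau_lw_lw 1 ltac:(easy)) as T1.
  pose proof (tau_uw 1 ltac:(easy)) as T2.
  pose proof (tau_lw_uw 1 ltac:(easy)) as T3.
  pose proof (tau_lw_lw 2 ltac:(easy)) as T4.
  pose proof (tau_uw 2 ltac:(easy)) as T5.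
  pose proof (tau_lw_lw 3 ltac:(easy)) as T6.
  pose proof (tau_uw 3 ltac:(easy)) as T7.
  pose proof (tau_lw_uw 2 ltac:(easy)) as T8.
  pose proof (tau_lw_lw 4 ltac:(easy)) as T9.
  pose proof (tau_uw 4 ltac:(easy)) as T10.
  repeat progress rewrite ?L1, ?L2, ?L3, ?L4, ?L5, ?L6, ?U1, ?U2, ?U3, ?U4, ?U5, ?U6 in *.
  cbn [map]. rewrite T1, T2, T3, T4, T5, T6, T7, T8, T9, T10. reflexivity.
Qed.

Theorem theorem4p5 :
  RpartN ((2%nat, 0%Z) :: (1%nat, 0%Z) :: (1%nat, 1%Z) :: nil) /\
  is_Rperm tau /\
  map tau (1 :: 2 :: 3 :: 4 :: 5 :: 6 :: 7 :: 8 :: 9 :: 10 :: nil)%Z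
    = (1 :: 2 :: 5 :: 3 :: 7 :: 4 :: 10 :: 13 :: 6 :: 15 :: nil)%Z /\
  RpartN ((2%nat, 0%Z) :: (1%nat, 1%Z) :: (2%nat, 1%Z) :: (3%nat, 0%Z) :: nil) /\
  is_Rperm tau_inv /\
  (forall n : Z, (1 <= n)%Z -> tau_inv (tau n) = n /\ tau (tau_inv n) = n).
Proof.
  split; [exact RpartN_tau_pieces|].
  split; [exact tau_is_Rperm|].
  split; [exact tau_first_values|].
  split; [exact RpartN_tau_inv_pieces|].
  split; [exact tau_inv_is_Rperm|].
  intros n Hn. split; [apply tau_in_N_cancel | apply tau_inv_in_N_cancel]; exact Hn.
Qed.
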